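(* Let $I,S:\mathbb{R}\to\mathbb{R}$ be $2\pi$-periodic Lipschitz functions with $I(\theta)\ge\rho$ for all $\theta$, for some $\rho>0$, and $\min_{[-\pi,\pi]}S<0<\max_{[-\pi,\pi]}S$. Let $(\theta_i(t))$ solve $\dot\theta_i=\omega_i+\frac{\kappa}{N}\sum_{j=1}^NI(\theta_j)S(\theta_i)$, $\theta_i(0)=\theta_i^0$. Fix $\mathcal B\subset\{1,\dots,N\}$ and let $\|\Omega_{\mathcal B}\|_\infty=\max_{i\in\mathcal B}|\omega_i|$. If \[ \kappa>\frac{\|\Omega_{\mathcal B}\|_\infty}{\rho\min\{-\min S,\max S\}}, \] then $\sup_{t\ge0}\theta_i(t)-\inf_{t\ge0}\theta_i(t)<2\pi$ for all $i\in\mathcal B$. *)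

From Stdlib Require Import Reals List.
From Coquelicot Require Import Coquelicot.
Import ListNotations.
Open Scope R_scope.

Definition periodic_2pi (f : R -> R) : Prop := forall x, f (x + 2 * PI) = f x.

Definition lipschitz (f : R -> R) : Prop :=
  exists L : R, forall x y, Rabs (f x - f y) <= L * Rabs (x - y).

Definition sumN (N : nat) (f : nat -> R) : R :=
  fold_right Rplus 0 (map f (seq 0 N)).

(* ||Omega_B||_inf = max_{i in B} |omega_i|, B a subset of {0,..,N-1}
   given by a boolean predicate (0 if B is empty). *)
Definition OmegaB_norm (N : nat) (B : nat -> bool) (omega : nat -> R) : R :=
  fold_right Rmax 0 (map (fun i => Rabs (omega i)) (filter B (seq 0 N))).

Definition is_min_on (f : R -> R) (a b m : R) : Prop :=
  (exists x, a <= x <= b /\ f x = m) /\ (forall x, a <= x <= b -> m <= f x).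
Definition is_max_on (f : R -> R) (a b M : R) : Prop :=
  (exists x, a <= x <= b /\ f x = M) /\ (forall x, a <= x <= b -> f x <= M).

Definition is_lower_bound (E : R -> Prop) (m : R) : Prop := forall x, E x -> m <= x.
Definition is_glb (E : R -> Prop) (m : R) : Prop :=
  is_lower_bound E m /\ forall b, is_lower_bound E b -> b <= m.

(* The coupling factor [kappa / N * sum_j I (theta_j)] is at least [kappa * rho].  Hence at a
   level [c] with [S c < - |omega_i| / (kappa rho)] the velocity of [theta_i] is negative, so
   [theta_i] never crosses [c] upwards; symmetrically it never crosses downwards a level with
   [S c > |omega_i| / (kappa rho)].  The bound on [kappa] makes the minimum and the maximum of [S]
   levels of these two kinds, so by periodicity and continuity every open interval of length
   [2 PI] contains levels of both kinds.  This traps [theta_i]; and if its range had length at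
   least [2 PI], a level of each kind would lie strictly inside it, and whichever of a time
   near the infimum and a time near the supremum comes first would force a forbidden crossing. *)

From Stdlib Require Import Reals List Lra Lia Classical.
From Coquelicot Require Import Coquelicot.
Open Scope R_scope.

Lemma periodic_2pi_IZR (g : R -> R) :
  periodic_2pi g -> forall k x, g (x + 2 * PI * IZR k) = g x.
Proof.
  intros Hg k. induction k using Z.peano_ind; intros x.
  - rewrite Rmult_0_r, Rplus_0_r; reflexivity.
  - rewrite succ_IZR.
    replace (x + 2 * PI * (IZR k + 1)) with (x + 2 * PI * IZR k + 2 * PI) by ring.
    rewrite Hg; apply IHk.
  - rewrite <- Z.sub_1_r, minus_IZR.
    replace (x + 2 * PI * (IZR k - 1)) with (x - 2 * PI + 2 * PI * IZR k) by ring.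
    rewrite IHk, <- (Hg (x - 2 * PI)). f_equal; ring.
Qed.

Lemma translate_into_window (p y : R) :
  exists k : Z, y < p + 2 * PI * IZR k <= y + 2 * PI.
Proof.
  pose proof PI_RGT_0 as Hpi.
  destruct (archimed ((y - p) / (2 * PI))) as [Hup Hup1].
  exists (up ((y - p) / (2 * PI))).
  assert (E : (y - p) / (2 * PI) * (2 * PI) = y - p) by (field; lra).
  split; nra.
Qed.

Lemma lipschitz_continuous (f : R -> R) (x : R) : lipschitz f -> continuous f x.
Proof.
  intros [L HL]. apply filterlim_locally. intros eps.
  set (L' := Rabs L + 1).
  assert (HL' : 0 < L') by (pose proof (Rabs_pos L); unfold L'; lra).
  exists (mkposreal _ (Rdiv_lt_0_compat eps _ (cond_pos eps) HL')).
  intros y Hy. change (Rabs (y - x) < eps / L') in Hy. change (Rabs (f y - f x) < eps).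
  apply (Rle_lt_trans _ (L' * Rabs (y - x))).
  - eapply Rle_trans; [apply HL|]. apply Rmult_le_compat_r; [apply Rabs_pos|].
    pose proof (RRle_abs L). unfold L'. lra.
  - replace (pos eps) with (L' * (eps / L')) by (field; lra).
    apply Rmult_lt_compat_l; assumption.
Qed.

Lemma periodic_window_lt (g : R -> R) (p a : R) :
  periodic_2pi g -> continuous g p -> g p < a ->
  forall y, exists c, y < c < y + 2 * PI /\ g c < a.
Proof.
  intros Hg Hc Hp y.
  destruct (Hc _ (open_lt a (g p) Hp)) as [eta Heta].
  destruct (translate_into_window p y) as [k Hk].
  set (d := Rmin eta (p + 2 * PI * IZR k - y) / 2).
  assert (Hd : 0 < d < eta).
  { assert (0 < Rmin eta (p + 2 * PI * IZR k - y)) by (apply Rmin_glb_lt; [apply cond_pos|lra]).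
    pose proof (Rmin_l eta (p + 2 * PI * IZR k - y)). unfold d; lra. }
  assert (Hdy : d < p + 2 * PI * IZR k - y).
  { pose proof (Rmin_r eta (p + 2 * PI * IZR k - y)). unfold d; lra. }
  exists (p - d + 2 * PI * IZR k). split; [lra|].
  rewrite periodic_2pi_IZR by exact Hg.
  apply Heta. change (Rabs (p - d - p) < eta).
  replace (p - d - p) with (- d) by ring. rewrite Rabs_Ropp, Rabs_pos_eq; lra.
Qed.

Lemma periodic_window_gt (g : R -> R) (p a : R) :
  periodic_2pi g -> continuous g p -> a < g p ->
  forall y, exists c, y < c < y + 2 * PI /\ a < g c.
Proof.
  intros Hg Hc Hp y.
  destruct (periodic_window_lt (fun x => - g x) p (- a)) with (y := y) as [c [Hcy Hgc]].
  - intros x. rewrite Hg. reflexivity.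
  - exact (continuous_opp g p Hc).
  - lra.
  - exists c. split; [exact Hcy|lra].
Qed.

Lemma glb_exists (E : R -> Prop) :
  (exists x, E x) -> (exists b, is_lower_bound E b) -> exists m, is_glb E m.
Proof.
  intros [x Ex] [b Hb].
  destruct (completeness (fun y => E (- y))) as [m [Hub Hlub]].
  - exists (- b). intros y Ey. specialize (Hb _ Ey). lra.
  - exists (- x). rewrite Ropp_involutive. exact Ex.
  - exists (- m). split.
    + intros y Ey. assert (- y <= m) by (apply Hub; rewrite Ropp_involutive; exact Ey). lra.
    + intros b' Hb'. assert (m <= - b'); [|lra].
      apply Hlub. intros y Ey. specialize (Hb' _ Ey). lra.
Qed.

Lemma is_lub_exists_gt (E : R -> Prop) (M a : R) :
  is_lub E M -> a < M -> exists x, E x /\ a < x.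
Proof.
  intros [_ HM] Ha. apply NNPP. intros Hno.
  assert (M <= a); [|lra]. apply HM. intros x Ex.
  apply Rnot_lt_le. intros Hx. apply Hno. exists x. split; assumption.
Qed.

Lemma is_glb_exists_lt (E : R -> Prop) (m a : R) :
  is_glb E m -> m < a -> exists x, E x /\ x < a.
Proof.
  intros [_ Hm] Ha. apply NNPP. intros Hno.
  assert (a <= m); [|lra]. apply Hm. intros x Ex.
  apply Rnot_lt_le. intros Hx. apply Hno. exists x. split; assumption.
Qed.

Lemma continuous_on_nonneg_of_derive (f : R -> R) :
  filterlim f (at_right 0) (locally (f 0)) -> (forall t, 0 < t -> ex_derive f t) ->
  continuous_on (Rle 0) f.
Proof.
  intros H0 Hd t Ht. destruct (Rle_lt_or_eq_dec 0 t Ht) as [Hpos|<-].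
  - intros P HP. apply (ex_derive_continuous f t (Hd t Hpos)) in HP.
    unfold filtermap, within in *. revert HP. apply filter_imp. auto.
  - apply filterlim_locally. intros eps.
    assert (Hr := proj1 (filterlim_locally f (f 0)) H0 eps).
    unfold at_right, within in *. revert Hr. apply filter_imp. intros y Hy Hy0.
    destruct (Rle_lt_or_eq_dec 0 y Hy0) as [Hlt|<-]; [exact (Hy Hlt)|apply ball_center].
Qed.

Lemma continuous_on_opp (D : R -> Prop) (f : R -> R) :
  continuous_on D f -> continuous_on D (fun t => - f t).
Proof.
  intros Hf x Dx. eapply filterlim_comp; [exact (Hf x Dx)|apply (filterlim_opp (f x))].
Qed.

Lemma is_derive_neg_at_right (f : R -> R) (t l : R) :
  is_derive f t l -> l < 0 -> at_right t (fun y => f y < f t).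
Proof.
  intros Hd Hl. apply is_derive_Reals in Hd.
  destruct (Hd (- l / 2)) as [d Hd']; [lra|].
  exists d. intros y Hy Hty. change (Rabs (y - t) < d) in Hy.
  set (h := y - t). replace y with (t + h) by (unfold h; ring).
  assert (Hq := Hd' h ltac:(unfold h; lra) Hy).
  apply Rabs_def2 in Hq.
  assert (E : f (t + h) - f t = (f (t + h) - f t) / h * h) by (field; unfold h; lra).
  assert (0 < h) by (unfold h; lra). nra.
Qed.

Definition never_upcrosses (f : R -> R) (c : R) : Prop :=
  forall s t, 0 <= s <= t -> f s < c -> f t <= c.

Lemma at_right_witness (P : R -> Prop) (u t : R) :
  at_right u P -> u < t -> exists y, u < y <= t /\ P y.
Proof.
  intros [d Hd] Hut. pose proof (cond_pos d).
  set (y := Rmin (u + d / 2) t).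
  assert (Hy : u < y <= u + d / 2 /\ y <= t).
  { split; [split|]; [apply Rmin_glb_lt; lra|apply Rmin_l|apply Rmin_r]. }
  exists y. split; [lra|]. apply Hd; [|lra].
  change (Rabs (y - u) < d). rewrite Rabs_pos_eq; lra.
Qed.

Lemma never_upcrosses_of_level_decrease (f : R -> R) (c : R) :
  continuous_on (Rle 0) f ->
  (forall t, 0 < t -> f t = c -> at_right t (fun y => f y < c)) ->
  never_upcrosses f c.
Proof.
  intros Hf Hdec s t [Hs Hst] Hfs. apply Rnot_lt_le. intros Hft.
  set (E := fun x => s <= x <= t /\ f x <= c).
  destruct (completeness E) as [u [Hub Hlub]].
  { exists t. intros x [Hx _]. lra. }
  { exists s. split; lra. }
  assert (Hsu : s <= u) by (apply Hub; split; lra).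
  assert (Hut : u <= t) by (apply Hlub; intros x [Hx _]; lra).
  assert (Hfu_le : f u <= c).
  { apply Rnot_lt_le. intros Hlt.
    destruct (Hf u ltac:(lra) _ (open_gt c (f u) Hlt)) as [d Hd].
    assert (u <= u - d); [|pose proof (cond_pos d); lra].
    apply Hlub. intros x [Hx Hfx]. apply Rnot_lt_le. intros Hxd.
    assert (x <= u) by (apply Hub; split; assumption).
    apply (Rle_not_lt _ _ Hfx), Hd; [|lra].
    change (Rabs (x - u) < d). rewrite Rabs_left1; lra. }
  assert (Hu_t : u < t) by (destruct (Req_dec u t); [subst; lra|lra]).
  (* [u] is the last time in [[s, t]] with [f <= c], so [f] cannot stay below [c] right after [u]. *)
  assert (Hright : at_right u (fun y => f y < c) -> False).
  { intros Hr. destruct (at_right_witness _ u t Hr Hu_t) as [y [Hy Hfy]].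
    assert (y <= u) by (apply Hub; split; lra). lra. }
  assert (Hfu : f u = c).
  { apply Rle_antisym; [exact Hfu_le|]. apply Rnot_lt_le. intros Hlt. apply Hright.
    generalize (Hf u ltac:(lra) _ (open_lt c (f u) Hlt)).
    unfold filtermap, at_right, within. apply filter_imp.
    intros y Hy Huy. apply Hy; lra. }
  apply Hright, Hdec; [|exact Hfu].
  destruct (Req_dec s u) as [<-|]; lra.
Qed.

Lemma range_lt_2PI_of_barriers (f : R -> R) :
  (forall y, exists c, y < c < y + 2 * PI /\ never_upcrosses f c) ->
  (forall y, exists c, y < c < y + 2 * PI /\ never_upcrosses (fun t => - f t) (- c)) ->
  exists M m : R,
    is_lub (fun x => exists t, 0 <= t /\ x = f t) M /\
    is_glb (fun x => exists t, 0 <= t /\ x = f t) m /\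
    M - m < 2 * PI.
Proof.
  intros Hup Hdown. set (E := fun x => exists t, 0 <= t /\ x = f t).
  assert (HE : E (f 0)) by (exists 0; split; [lra|reflexivity]).
  destruct (Hup (f 0)) as [cU [HcU HU]].
  destruct (Hdown (f 0 - 2 * PI)) as [cL [HcL HL]].
  destruct (completeness E) as [M HM].
  { exists cU. intros x [t [Ht ->]]. apply (HU 0 t); lra. }
  { exists (f 0). exact HE. }
  destruct (glb_exists E) as [m Hm].
  { exists (f 0). exact HE. }
  { exists cL. intros x [t [Ht ->]]. assert (- f t <= - cL) by (apply (HL 0 t); lra). lra. }
  exists M, m. split; [exact HM|]. split; [exact Hm|].
  apply Rnot_le_lt. intros Hwide.
  destruct (Hup m) as [c [Hc Hbar]].
  destruct (Hdown m) as [c' [Hc' Hbar']].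
  destruct (is_glb_exists_lt E m (Rmin c c') Hm) as [x1 [[t1 [Ht1 ->]] Hx1]].
  { apply Rmin_glb_lt; lra. }
  destruct (is_lub_exists_gt E M (Rmax c c') HM) as [x2 [[t2 [Ht2 ->]] Hx2]].
  { apply Rmax_lub_lt; lra. }
  pose proof (Rmin_l c c'). pose proof (Rmin_r c c').
  pose proof (Rmax_l c c'). pose proof (Rmax_r c c').
  destruct (Rle_or_lt t1 t2).
  - assert (f t2 <= c) by (apply (Hbar t1 t2); lra). lra.
  - assert (- f t1 <= - c') by (apply (Hbar' t2 t1); lra). lra.
Qed.

Lemma sumN_ge (N : nat) (g : nat -> R) (rho : R) :
  (forall j, rho <= g j) -> INR N * rho <= sumN N g.
Proof.
  intros Hg. unfold sumN. rewrite <- (length_seq N 0) at 1.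
  induction (seq 0 N) as [|j l IH]; cbn [length map fold_right].
  - simpl; lra.
  - rewrite S_INR. specialize (Hg j). lra.
Qed.

Lemma Rabs_le_OmegaB_norm (N : nat) (B : nat -> bool) (omega : nat -> R) (i : nat) :
  B i = true -> (i < N)%nat -> Rabs (omega i) <= OmegaB_norm N B omega.
Proof.
  intros Hi HiN. unfold OmegaB_norm.
  assert (Hin : In (Rabs (omega i)) (map (fun j => Rabs (omega j)) (filter B (seq 0 N)))).
  { apply (in_map (fun j => Rabs (omega j))), filter_In. split; [apply in_seq; lia|exact Hi]. }
  induction (map _ _) as [|x l IH]; [contradiction|].
  destruct Hin as [->|Hin]; cbn [fold_right]; [apply Rmax_l|].
  eapply Rle_trans; [exact (IH Hin)|apply Rmax_r].
Qed.

Lemma strong_coupling_margins (rho kappa Smin Smax W w : R) :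
  0 < rho -> Smin < 0 -> 0 < Smax -> 0 <= w <= W ->
  kappa > W / (rho * Rmin (- Smin) Smax) ->
  0 < kappa /\ Smin < - w / (kappa * rho) /\ w / (kappa * rho) < Smax.
Proof.
  intros Hrho HSmin HSmax Hw Hk.
  pose proof (Rmin_l (- Smin) Smax). pose proof (Rmin_r (- Smin) Smax).
  assert (Hr : 0 < Rmin (- Smin) Smax) by (apply Rmin_glb_lt; lra).
  set (r := Rmin (- Smin) Smax) in *.
  assert (HW : W < kappa * rho * r).
  { replace W with (W / (rho * r) * (rho * r)) at 1 by (field; nra).
    rewrite (Rmult_assoc kappa). apply Rmult_lt_compat_r; nra. }
  assert (Hk0 : 0 < kappa).
  { assert (0 <= W / (rho * r)) by (apply Rdiv_le_0_compat; nra). lra. }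
  assert (HK : 0 < kappa * rho) by nra.
  assert (kappa * rho * r <= kappa * rho * (- Smin)) by (apply Rmult_le_compat_l; lra).
  assert (kappa * rho * r <= kappa * rho * Smax) by (apply Rmult_le_compat_l; lra).
  split; [exact Hk0|split].
  - apply (Rmult_lt_reg_l (kappa * rho)); [exact HK|].
    replace (kappa * rho * (- w / (kappa * rho))) with (- w) by (field; lra). lra.
  - apply (Rmult_lt_reg_l (kappa * rho)); [exact HK|].
    replace (kappa * rho * (w / (kappa * rho))) with w by (field; lra). lra.
Qed.

Lemma drift_neg (K A s w : R) :
  0 < K -> K <= A -> s < - Rabs w / K -> w + A * s < 0.
Proof.
  intros HK HA Hs.
  assert (HKs : K * s < - Rabs w).
  { apply (Rmult_lt_compat_l K) in Hs; [|exact HK].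
    replace (K * (- Rabs w / K)) with (- Rabs w) in Hs by (field; lra). exact Hs. }
  pose proof (RRle_abs w). pose proof (Rabs_pos w). nra.
Qed.

Lemma drift_pos (K A s w : R) :
  0 < K -> K <= A -> Rabs w / K < s -> 0 < w + A * s.
Proof.
  intros HK HA Hs.
  assert (- w + A * - s < 0); [|lra].
  apply drift_neg with K; [exact HK|exact HA|].
  rewrite Rabs_Ropp. unfold Rdiv in *. lra.
Qed.

Section Winfree.

Variables (I S : R -> R) (kappa rho : R) (N : nat) (omega : nat -> R) (theta : nat -> R -> R).
Hypothesis Hkappa : 0 < kappa.
Hypothesis Hrho : 0 < rho.
Hypothesis HIrho : forall x, rho <= I x.
Hypothesis HN : (0 < N)%nat.
Hypothesis Hcont0 : forall i, (i < N)%nat ->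
  filterlim (theta i) (at_right 0) (locally (theta i 0)).
Hypothesis Hode : forall i t, (i < N)%nat -> 0 < t ->
  is_derive (theta i) t
    (omega i + kappa / INR N * sumN N (fun j => I (theta j t)) * S (theta i t)).

Lemma winfree_coupling_ge t : kappa * rho <= kappa / INR N * sumN N (fun j => I (theta j t)).
Proof.
  assert (HN' : 0 < INR N) by (apply lt_0_INR; exact HN).
  replace (kappa * rho) with (kappa / INR N * (INR N * rho)) by (field; lra).
  apply Rmult_le_compat_l; [apply Rdiv_le_0_compat; lra|].
  apply sumN_ge. intros j. apply HIrho.
Qed.

Lemma winfree_continuous_on i : (i < N)%nat -> continuous_on (Rle 0) (theta i).
Proof.
  intros Hi. apply continuous_on_nonneg_of_derive; [exact (Hcont0 i Hi)|].
  intros t Ht. eexists. exact (Hode i t Hi Ht).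
Qed.

Lemma winfree_upper_barrier i c :
  (i < N)%nat -> S c < - Rabs (omega i) / (kappa * rho) -> never_upcrosses (theta i) c.
Proof.
  intros Hi Hc. apply never_upcrosses_of_level_decrease; [exact (winfree_continuous_on i Hi)|].
  intros t Ht Hth. rewrite <- Hth. apply (is_derive_neg_at_right _ _ _ (Hode i t Hi Ht)).
  rewrite Hth. apply drift_neg with (kappa * rho); [nra|apply winfree_coupling_ge|exact Hc].
Qed.

Lemma winfree_lower_barrier i c :
  (i < N)%nat -> Rabs (omega i) / (kappa * rho) < S c ->
  never_upcrosses (fun t => - theta i t) (- c).
Proof.
  intros Hi Hc. apply never_upcrosses_of_level_decrease.
  { apply continuous_on_opp, winfree_continuous_on, Hi. }
  intros t Ht Hth. rewrite <- Hth.
  apply (is_derive_neg_at_right _ _ _ (is_derive_opp _ _ _ (Hode i t Hi Ht))).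
  replace (theta i t) with c by lra.
  apply Ropp_lt_gt_0_contravar, (drift_pos (kappa * rho)); [nra|apply winfree_coupling_ge|exact Hc].
Qed.

End Winfree.

Theorem proposition4p2
  (I S : R -> R) (rho Smin Smax kappa : R) (N : nat)
  (omega : nat -> R) (theta : nat -> R -> R) (B : nat -> bool)
  (HIper : periodic_2pi I) (HSper : periodic_2pi S)
  (HIlip : lipschitz I) (HSlip : lipschitz S)
  (Hrho : 0 < rho) (HIrho : forall x, rho <= I x)
  (HSmin : is_min_on S (- PI) PI Smin) (HSmax : is_max_on S (- PI) PI Smax)
  (HSmin0 : Smin < 0) (HSmax0 : 0 < Smax)
  (HN : (0 < N)%nat)
  (HBsub : forall i, B i = true -> (i < N)%nat)
  (Hcont0 : forall i, (i < N)%nat ->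
     filterlim (theta i) (at_right 0) (locally (theta i 0)))
  (Hode : forall i t, (i < N)%nat -> 0 < t ->
     is_derive (theta i) t
       (omega i + kappa / INR N * sumN N (fun j => I (theta j t)) * S (theta i t)))
  (Hkappa : kappa > OmegaB_norm N B omega / (rho * Rmin (- Smin) Smax)) :
  forall i, B i = true ->
    exists M m : R,
      is_lub (fun x => exists t, 0 <= t /\ x = theta i t) M /\
      is_glb (fun x => exists t, 0 <= t /\ x = theta i t) m /\
      M - m < 2 * PI.
Proof.
  intros i Hi. pose proof (HBsub i Hi) as HiN.
  destruct (strong_coupling_margins rho kappa Smin Smax (OmegaB_norm N B omega)
              (Rabs (omega i)) Hrho HSmin0 HSmax0
              (conj (Rabs_pos _) (Rabs_le_OmegaB_norm N B omega i Hi HiN)) Hkappa)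
    as [Hk [Hlow Hhigh]].
  destruct HSmin as [[pmin [_ HSpmin]] _]. destruct HSmax as [[pmax [_ HSpmax]] _].
  apply range_lt_2PI_of_barriers.
  - intros y.
    destruct (periodic_window_lt S pmin _ HSper (lipschitz_continuous S pmin HSlip)
                ltac:(rewrite HSpmin; exact Hlow) y) as [c [Hc HSc]].
    exists c. split; [exact Hc|].
    apply (winfree_upper_barrier I S kappa rho N omega theta); assumption.
  - intros y.
    destruct (periodic_window_gt S pmax _ HSper (lipschitz_continuous S pmax HSlip)
                ltac:(rewrite HSpmax; exact Hhigh) y) as [c [Hc HSc]].
    exists c. split; [exact Hc|].
    apply (winfree_lower_barrier I S kappa rho N omega theta); assumption.
Qed.
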